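(* Let $d$ be a positive integer, $d < q \le \infty$, and let $p = q/(q-d)$ (with $p=1$ if $q=\infty$). Let $\mathbf{a} = (a_j)_{j=1}^\infty\in\ell^p$ and $M>0$. Let $X_{q,M} = \{\mathbf{x}\in\ell^q : \|\mathbf{x}\|_q\le M\}$, viewed as a subspace of $\Omega$, where $\Omega = \prod_{j=1}^\infty[-M,M]$ in the real case and $\Omega=\prod_{j=1}^\infty\{x\in\mathbb{C}:|x|\le M\}$ in the complex case, with the product topology. Then the function $f_d$ on $X_{q,M}$ defined by \[ f_d(\mathbf{x}) = (\mathbf{a},\mathbf{x}^d) = \sum_{j=1}^\infty a_j x_j^d \] is continuous with respect to the subspace topology on $X_{q,M}$ induced by the product topology on $\Omega$.
   Context: $\ell^p$ ($1\le p<\infty$) denotes sequences with $\|\mathbf{a}\|_p=(\sum_j|a_j|^p)^{1/p}<\infty$, and $\ell^\infty$ bounded sequences with the sup norm. Sequences and coefficients are real in the real case and complex in the complex case. The series defining $f_d$ converges absolutely by Hölder's inequality since $\mathbf{x}^d=(x_j^d)\in\ell^{q/d}$ and $(p,q/d)$ is a conjugate pair. *)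

From mathcomp Require Import all_boot all_order all_algebra.
From mathcomp Require Import all_classical all_reals all_analysis.
From mathcomp Require Import complex.
Import Order.TTheory GRing.Theory Num.Theory.
Import numFieldNormedType.Exports.

Set Implicit Arguments.
Unset Strict Implicit.
Unset Printing Implicit Defensive.

Local Open Scope ring_scope.

Notation Cplx R := (complex.complex R).
Notation cmod := (@complex.ComplexField.Normc.normc _).

Section lp.
Context {R : realType}.

(* The l^q (quasi)norm, q in (0, +oo], of a sequence through the moduli
   nx j = |x_j| >= 0, as an extended real (= +oo iff x is not in l^q):
   q finite:  (sum_j |x_j|^q)^(1/q);   q = +oo:  sup_j |x_j|.
   (q = -oo is junk and never used.) *)
Definition lnorm (q : \bar R) (nx : nat -> R) : \bar R :=
  match q with
  | EFin r => poweR (\sum_(0 <= j <oo) ((nx j) `^ r)%:E)%E r^-1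
  | +oo%E => ereal_sup (range (fun j => (nx j)%:E))
  | -oo%E => 0%E
  end.

Definition conj_exp (d : nat) (q : \bar R) : R :=
  match q with
  | EFin r => r / (r - d%:R)
  | _ => 1
  end.

Definition Xqm {K : numFieldType} (nrm : K -> R) (q : \bar R) (M : R)
  : set {ptws nat -> K} :=
  [set x | (lnorm q (fun j => nrm (x j)) <= M%:E)%E].

Definition fd {K : numFieldType} (d : nat) (a : nat -> K)
  : {ptws nat -> K} -> K :=
  fun x => limn (series (fun j => a j * x j ^+ d)).

End lp.

(** The partial sums of [f_d] are polynomials in finitely many coordinates,
    hence continuous for the product topology, so it suffices that they
    converge uniformly on [X_{q,M}].  For finite [q], Young's inequality with
    the conjugate exponents [p] and [q/d] gives, for every [eta > 0], a
    [kappa] with [|a_j| |x_j|^d <= kappa |a_j|^p + eta |x_j|^q]; summing over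
    [j >= n] bounds the tail of the series by [kappa] times a tail of
    [sum_j |a_j|^p] plus [eta M^q], uniformly in [x].  For [q = +oo] the tail
    is at most [M^d sum_(j >= n) |a_j|].  Only the moduli [|a_j|] and [|x_j|]
    enter the estimates, so the real and complex cases are one argument. *)

From mathcomp Require Import all_boot all_order all_algebra.
From mathcomp Require Import all_classical all_reals all_analysis.
From mathcomp Require Import complex.
From mathcomp.algebra_tactics Require Import ring lra.
Import Order.TTheory GRing.Theory Num.Theory.
Import numFieldNormedType.Exports.

Set Implicit Arguments.
Unset Strict Implicit.
Unset Printing Implicit Defensive.

Local Open Scope classical_set_scope.
Local Open Scope ring_scope.

Section lnorm_tails.
Context {R : realType}.

Lemma nnseries_tail_le (u : nat -> R) : (forall j, 0 <= u j) ->
  cvgn (series u) -> forall e, 0 < e ->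
  exists N, forall n m, (N <= n)%N -> \sum_(n <= j < m) u j <= e.
Proof.
move=> u0 cu e e0.
have nd : nondecreasing_seq (series u) by apply: nondecreasing_series => *.
have le_lim := nondecreasing_cvgn_le nd cu.
have [N _ near_lim] := (cvgrPdist_lt _ _).1 cu e e0.
exists N => n m Nn.
have [nm|mn] := leqP n m; last by rewrite big_geq ?(ltnW mn) ?ltW.
rewrite -sub_series_geq //.
have := near_lim N (leqnn N); rewrite /= ger0_norm ?subr_ge0 ?le_lim //.
have : series u N <= series u n by apply: nd.
have := le_lim m; lra.
Qed.

Lemma lnorm_lty_cvg (r : R) (b : nat -> R) : 0 < r ->
  (lnorm r%:E b < +oo)%E -> cvgn (series (fun j => b j `^ r)).
Proof.
move=> r0 /= fin; apply: nnseries_is_cvg => [j|]; first exact: powR_ge0.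
move: fin; rewrite !ltey; apply: contra => /eqP ->.
by rewrite poweRyr // invr_eq0 gt_eqF.
Qed.

Lemma sum_powR_le_lnorm (r M : R) (c : nat -> R) n m : 0 < r -> 0 < M ->
  (lnorm r%:E c <= M%:E)%E -> \sum_(n <= j < m) c j `^ r <= M `^ r.
Proof.
move=> r0 M0 /= cM.
have c0 j : 0 <= c j `^ r by exact: powR_ge0.
apply: (@le_trans _ _ (\sum_(0 <= j < m) c j `^ r)).
  have [nm|mn] := leqP n m; last by rewrite big_geq ?(ltnW mn) ?sumr_ge0.
  by rewrite (@big_cat_nat _ _ _ n 0 m) //= lerDr sumr_ge0.
have S0 : (0 <= \sum_(0 <= j <oo) ((c j) `^ r)%:E)%E.
  by apply: nneseries_ge0 => *; rewrite lee_fin.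
have Sm : ((\sum_(0 <= j < m) (c j) `^ r)%:E <=
           \sum_(0 <= j <oo) ((c j) `^ r)%:E)%E.
  by rewrite -sumEFin; apply: nneseries_lim_ge => *; rewrite lee_fin.
move: S0 Sm cM; case: (\sum_(0 <= j <oo) ((c j) `^ r)%:E)%E => [s| |] //.
- rewrite !lee_fin => s0 Ss sM; apply: (le_trans Ss).
  have -> : s = (s `^ r^-1) `^ r by rewrite -powRrM mulVf ?gt_eqF // powRr1.
  by apply: (ge0_ler_powR (ltW r0)); rewrite // nnegrE ?powR_ge0 ?(ltW M0).
- by move=> _ _; rewrite poweRyr ?invr_eq0 ?gt_eqF.
Qed.

Lemma lnorm_infty_le (M : R) (c : nat -> R) j :
  (lnorm +oo%E c <= M%:E)%E -> c j <= M.
Proof.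
move=> cM; rewrite -lee_fin (le_trans _ cM) //.
by apply: ereal_sup_ubound; exists j.
Qed.

Lemma conjugate_powR_eps (p q eta : R) :
  0 < p -> 0 < q -> p^-1 + q^-1 = 1 -> 0 < eta ->
  exists2 kap : R, 0 < kap &
    forall x y, 0 <= x -> 0 <= y -> x * y <= kap * x `^ p + eta * y `^ q.
Proof.
move=> p0 q0 pq eta0.
set lam := (eta * q) `^ q^-1.
have lam0 : 0 < lam by rewrite powR_gt0 // mulr_gt0.
have lamq : lam `^ q = eta * q.
  by rewrite -powRrM mulVf ?gt_eqF // powRr1 // ltW ?mulr_gt0.
exists (lam^-1 `^ p / p); first by rewrite divr_gt0 // powR_gt0 // invr_gt0.
move=> x y x0 y0.
have -> : lam^-1 `^ p / p * x `^ p + eta * y `^ q =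
    (x * lam^-1) `^ p / p + (lam * y) `^ q / q.
  by rewrite !powRM ?invr_ge0 ?(ltW lam0) // lamq; field; rewrite !gt_eqF.
have -> : x * y = (x * lam^-1) * (lam * y) by field; rewrite gt_eqF.
by apply: conjugate_powR => //; apply: mulr_ge0; rewrite // ?invr_ge0 ltW.
Qed.

Lemma lnorm_ball_tail_le_fin (d : nat) (r M : R) (b : nat -> R) :
  (0 < d)%N -> d%:R < r -> 0 < M -> (forall j, 0 <= b j) ->
  (lnorm (conj_exp d r%:E)%:E b < +oo)%E ->
  forall e, 0 < e -> exists N, forall c : nat -> R, (forall j, 0 <= c j) ->
    (lnorm r%:E c <= M%:E)%E ->
    forall n m, (N <= n)%N -> \sum_(n <= j < m) b j * c j ^+ d <= e.
Proof.
move=> d0 dr M0 b0 bp e e0.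
have d0' : 0 < d%:R :> R by rewrite ltr0n.
have r0 : 0 < r by lra.
(* [q] is the exponent conjugate to [p], chosen so that [c_j^r = (c_j^d)^q]. *)
set p := r / (r - d%:R); set q := r / d%:R.
have p0 : 0 < p by rewrite divr_gt0 // subr_gt0.
have q0 : 0 < q by rewrite divr_gt0.
have pq : p^-1 + q^-1 = 1 by rewrite !invf_div; field; rewrite gt_eqF.
have Mr0 : 0 <= M `^ r by exact: powR_ge0.
set eta := e / (2 * (M `^ r + 1)).
have eta0 : 0 < eta by rewrite divr_gt0 // mulr_gt0 // ltr_wpDl.
have [kap kap0 young] := conjugate_powR_eps p0 q0 pq eta0.
have [N tail] := nnseries_tail_le (fun j => powR_ge0 (b j) p)
  (lnorm_lty_cvg p0 bp) (divr_gt0 e0 (mulr_gt0 (ltr0Sn _ 1) kap0)).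
exists N => c c0 cM n m Nn.
have term j : b j * c j ^+ d <= kap * b j `^ p + eta * c j `^ r.
  have -> : c j `^ r = (c j ^+ d) `^ q.
    by rewrite -powR_mulrn // -powRrM /q mulrCA divff ?gt_eqF // mulr1.
  exact: young (b0 j) (exprn_ge0 _ (c0 j)).
apply: le_trans (ler_sum _ (fun j _ => term j)) _.
rewrite big_split /= -!mulr_sumr.
have b_tail : kap * \sum_(n <= j < m) b j `^ p <= e / 2.
  by rewrite mulrC -ler_pdivlMr // -mulrA -invfM; exact: tail.
have c_tail : eta * \sum_(n <= j < m) c j `^ r <= e / 2.
  apply: le_trans (ler_wpM2l (ltW eta0) (sum_powR_le_lnorm n m r0 M0 cM)) _.
  rewrite /eta mulrAC ler_pdivrMr ?mulr_gt0 ?ltr_wpDl //.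
  have : e * M `^ r <= e * (M `^ r + 1) by rewrite ler_pM2l // lerDl.
  lra.
lra.
Qed.

Lemma lnorm_ball_tail_le_infty (d : nat) (M : R) (b : nat -> R) :
  0 < M -> (forall j, 0 <= b j) -> (lnorm (conj_exp d +oo%E)%:E b < +oo)%E ->
  forall e, 0 < e -> exists N, forall c : nat -> R, (forall j, 0 <= c j) ->
    (lnorm +oo%E c <= M%:E)%E ->
    forall n m, (N <= n)%N -> \sum_(n <= j < m) b j * c j ^+ d <= e.
Proof.
move=> M0 b0 bp e e0.
have cb : cvgn (series b).
  have := lnorm_lty_cvg ltr01 bp.
  by rewrite (_ : (fun j => b j `^ 1) = b) //; apply/funext => j; rewrite powRr1.
have Md0 : 0 < M ^+ d by rewrite exprn_gt0.
have [N tail] := nnseries_tail_le b0 cb (divr_gt0 e0 Md0).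
exists N => c c0 cM n m Nn.
apply: (@le_trans _ _ (\sum_(n <= j < m) b j * M ^+ d)).
  apply: ler_sum => j _; rewrite ler_wpM2l // lerXn2r ?nnegrE ?(ltW M0) //.
  exact: lnorm_infty_le.
by rewrite -mulr_suml -ler_pdivlMr //; exact: tail.
Qed.

Lemma lnorm_ball_tail_le (d : nat) (q : \bar R) (M : R) (b : nat -> R) :
  (0 < d)%N -> (d%:R%:E < q)%E -> 0 < M -> (forall j, 0 <= b j) ->
  (lnorm (conj_exp d q)%:E b < +oo)%E ->
  forall e, 0 < e -> exists N, forall c : nat -> R, (forall j, 0 <= c j) ->
    (lnorm q c <= M%:E)%E ->
    forall n m, (N <= n)%N -> \sum_(n <= j < m) b j * c j ^+ d <= e.
Proof.
case: q => [r| |] // d0 dq M0 b0 bp.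
- by apply: lnorm_ball_tail_le_fin; rewrite // -lte_fin.
- exact: lnorm_ball_tail_le_infty.
Qed.

End lnorm_tails.

(* [nrm] is a real-valued absolute value inducing the topology of [K]; it is
   needed because the norm of [K = Cplx R] is itself complex-valued. *)
Section modulus_series.
Variables (R : realType) (K : numFieldType) (nrm : K -> R).
Hypotheses (nrm_ge0 : forall x, 0 <= nrm x) (nrm0 : nrm 0 = 0)
  (nrmD : forall x y, nrm (x + y) <= nrm x + nrm y).
Hypothesis nrm_small : forall e : K, 0 < e ->
  exists2 dl : R, 0 < dl & forall z, nrm z < dl -> `|z| < e.
Hypothesis nrm_series_cvg : forall u : nat -> K,
  cvgn (series (fun j => nrm (u j))) -> cvgn (series u).

Lemma nrm_sum (r : seq nat) (F : nat -> K) :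
  nrm (\sum_(i <- r) F i) <= \sum_(i <- r) nrm (F i).
Proof.
apply: (big_ind2 (fun x y => nrm x <= y)) => //; first by rewrite nrm0.
by move=> x1 x2 y1 y2 h1 h2; apply: le_trans (nrmD _ _) _; exact: lerD.
Qed.

Lemma cvg_series_nrm_tails (u : nat -> K) :
  (forall e, 0 < e -> exists N, forall n m, (N <= n)%N ->
     \sum_(n <= j < m) nrm (u j) <= e) ->
  cvgn (series u).
Proof.
move=> tails; apply: nrm_series_cvg.
have nd : nondecreasing_seq (series (fun j => nrm (u j))).
  by apply: nondecreasing_series => *.
apply: nondecreasing_is_cvgn => //.
have [N tailN] := tails _ ltr01.
exists (series (fun j => nrm (u j)) N + 1) => _ [m _ <-].
have [Nm|mN] := leqP N m.
  by rewrite /series /= (@big_cat_nat _ _ _ N 0 m) //= lerD // tailN.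
by apply: le_trans (nd _ _ (ltnW mN)) _; rewrite lerDl.
Qed.

Lemma series_uniform_cvg (U : choiceType) (A : set U) (u : nat -> U -> K) :
  (forall e, 0 < e -> exists N, forall y, A y -> forall n m, (N <= n)%N ->
     \sum_(n <= j < m) nrm (u j y) <= e) ->
  {uniform A, (fun n y => series (u ^~ y) n) @ \oo -->
              (fun y => limn (series (u ^~ y)))}.
Proof.
move=> tails P /uniform_nbhs [E [+ EP]]; rewrite -entourage_ballE.
move=> [e /= e0 ballE].
suff : \forall n \near \oo, forall y, A y ->
    ball (limn (series (u ^~ y))) e (series (u ^~ y) n).
  by apply: filterS => n near_n; apply: EP => y Ay; apply: ballE; exact: near_n.
have [dl dl0 small] := nrm_small (divr_gt0 e0 (ltr0Sn _ 1)).
have [N tailN] := tails _ (divr_gt0 dl0 (ltr0Sn _ 1)).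
exists N => // n Nn y Ay; apply: ball_sym.
apply: (subset_closure_half (r := e)) => //.
have cvg_y : cvgn (series (u ^~ y)).
  apply: cvg_series_nrm_tails => e' e'0.
  by have [N' tailN'] := tails _ e'0; exists N' => *; exact: tailN'.
(* [S_m] stays in the closed ball of radius [e / 2] around [S_n], hence so does its limit. *)
apply: (closed_cvg _ (closed_ball_closed (r := e / 2)) _ _ cvg_y).
exists n => // m /= nm; apply: subset_closed_ball.
rewrite -ball_normE /= distrC sub_series_geq //; apply: small.
apply: le_lt_trans (nrm_sum _ _) _.
apply: le_lt_trans (tailN y Ay n m Nn) _.
by rewrite ltr_pdivrMr // ltr_pMr ?ltr1n.
Qed.

Lemma series_continuous (U : topologicalType) (u : nat -> U -> K) n :
  (forall j, continuous (u j)) -> continuous (fun y => series (u ^~ y) n).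
Proof.
move=> u_cont; elim: n => [|n IHn].
  by under eq_fun do rewrite /series /= big_geq //; exact: cst_continuous.
under eq_fun do rewrite seriesSr.
by move=> y; exact: (continuousD (IHn y) (u_cont n y)).
Qed.

Lemma series_limn_continuous (U : topologicalType) (A : set U)
    (u : nat -> U -> K) :
  (forall j, continuous (u j)) ->
  (forall e, 0 < e -> exists N, forall y, A y -> forall n m, (N <= n)%N ->
     \sum_(n <= j < m) nrm (u j y) <= e) ->
  {within A, continuous (fun y => limn (series (u ^~ y)))}.
Proof.
move=> u_cont tails.
apply: uniform_limit_continuous_subspace (series_uniform_cvg tails).
suff : \forall n \near \oo, {within A, continuous (fun y => series (u ^~ y) n)}
  by [].
apply: nearW => n; apply: continuous_subspaceT; exact: series_continuous.
Qed.

Hypotheses (nrm1 : nrm 1 = 1) (nrmM : forall x y, nrm (x * y) = nrm x * nrm y).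

Lemma nrmX x n : nrm (x ^+ n) = nrm x ^+ n.
Proof. by elim: n => [|n IHn]; rewrite ?expr0 // !exprS nrmM IHn. Qed.

Lemma monomial_continuous (c : K) (d j : nat) :
  continuous (fun y : {ptws nat -> K} => c * y j ^+ d).
Proof.
move=> x; apply: (@cvgMl_tmp K _ (nbhs x) _).
elim: d => [|d IHd]; first exact: cvg_cst.
have -> : (fun y : {ptws nat -> K} => y j ^+ d.+1) = (fun y => y j * y j ^+ d).
  by apply/funext => y; rewrite exprS.
rewrite exprS; apply: (@cvgM K _ (nbhs x) _) => //.
exact: (@proj_continuous nat (fun=> K) j x).
Qed.

Lemma fd_continuous (d : nat) (q : \bar R) (M : R) (a : nat -> K) :
  (0 < d)%N -> (d%:R%:E < q)%E -> 0 < M ->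
  (lnorm (conj_exp d q)%:E (fun j => nrm (a j)) < +oo)%E ->
  {within Xqm nrm q M, continuous (fd d a)}.
Proof.
move=> d0 dq M0 ap.
apply: series_limn_continuous => [j|e e0]; first exact: monomial_continuous.
have [N tailN] := lnorm_ball_tail_le d0 dq M0 (fun j => nrm_ge0 (a j)) ap e0.
exists N => y Xy n m Nn; under eq_bigr do rewrite nrmM nrmX.
exact: tailN (fun j => nrm_ge0 (y j)) Xy n m Nn.
Qed.

End modulus_series.

Section complex_modulus.
Variable R : realType.
Import ComplexField Normc.

Lemma cmod_ge0 (z : Cplx R) : 0 <= cmod z.
Proof. by case: z => x y; rewrite /= sqrtr_ge0. Qed.

Lemma normC_cmod (z : Cplx R) : `|z| = (cmod z)%:C%C.
Proof. by case: z => x y; rewrite normc_def. Qed.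

Lemma Re_le_cmod (z : Cplx R) : `|complex.Re z| <= cmod z.
Proof.
by case: z => x y /=; rewrite -sqrtr_sqr ler_wsqrtr // lerDl sqr_ge0.
Qed.

Lemma Im_le_cmod (z : Cplx R) : `|complex.Im z| <= cmod z.
Proof.
by case: z => x y /=; rewrite -sqrtr_sqr ler_wsqrtr // lerDr sqr_ge0.
Qed.

Lemma gt0_complexE (e : Cplx R) :
  0 < e -> 0 < complex.Re e /\ e = (complex.Re e)%:C%C.
Proof. by case: e => x y; rewrite ltcE /= => /andP[/eqP -> x0]. Qed.

Lemma cmod_small (e : Cplx R) : 0 < e ->
  exists2 dl : R, 0 < dl & forall z, cmod z < dl -> `|z| < e.
Proof.
move=> /gt0_complexE[Re0 ->]; exists (complex.Re e) => // z.
by rewrite normC_cmod ltcR.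
Qed.

(* The casts select the topology of [Cplx R] as a numeric field. *)
Lemma cvg_real_complex (s : nat -> R) (l : R) :
  s @ \oo --> l ->
  (fun n => (s n)%:C%C : (Cplx R : numFieldType)) @ \oo -->
    (l%:C%C : (Cplx R : numFieldType)).
Proof.
move=> sl; apply/cvgrPdist_lt => e /gt0_complexE[Re0 ->].
have [N _ near_l] := (cvgrPdist_lt _ _).1 sl _ Re0.
exists N => // n /near_l.
by rewrite normC_cmod -rmorphB /= ltcR expr0n addr0 sqrtr_sqr.
Qed.

Lemma cmod_series_cvg (u : nat -> (Cplx R : numFieldType)) :
  cvgn (series (fun j => cmod (u j))) -> cvgn (series u).
Proof.
move=> cu.
have part_cvg (f : Cplx R -> R) : (forall z, `|f z| <= cmod z) ->
    cvgn (series (fun j => f (u j))).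
  move=> f_le; apply: normed_cvg; apply: series_le_cvg cu => n //.
  - exact: normr_ge0.
  - exact: cmod_ge0.
  - exact: f_le.
have -> : series u = fun n => (series (fun j => complex.Re (u j)) n)%:C%C +
    'i%C * (series (fun j => complex.Im (u j)) n)%:C%C.
  by apply/funext => n; rewrite [LHS]complexE /series /= !raddf_sum.
apply: cvgP; apply: cvgD; first exact: cvg_real_complex (part_cvg _ Re_le_cmod).
by apply: cvgMl_tmp; exact: cvg_real_complex (part_cvg _ Im_le_cmod).
Qed.

End complex_modulus.

Theorem lemma2 (R : realType) (d : nat) (q : \bar R) (M : R) :
  (0 < d)%N -> (d%:R%:E < q)%E -> 0 < M ->
  (* real case *)
  (forall a : nat -> R,
     (lnorm (conj_exp d q)%:E (fun j => `|a j|%R) < +oo)%E ->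
     {within Xqm (fun t : R => `|t|%R) q M, continuous (fd d a)})
  /\
  (* complex case *)
  (forall a : nat -> Cplx R,
     (lnorm (conj_exp d q)%:E (fun j => cmod (a j))%R < +oo)%E ->
     {within Xqm (fun z : Cplx R => cmod z) q M, continuous (fd d a)}).
Proof.
move=> d0 dq M0; split=> a ap; apply: fd_continuous ap => //.
- exact: normr0.
- exact: ler_normD.
- by move=> e e0; exists e.
- exact: normed_cvg.
- exact: normr1.
- exact: normrM.
- exact: cmod_ge0.
- exact: ComplexField.Normc.normc0.
- exact: le_normcD.
- exact: cmod_small.
- exact: cmod_series_cvg.
- exact: ComplexField.Normc.normc1.
- exact: ComplexField.Normc.normcM.
Qed.
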